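(* Let $d\ge 2$ and consider a translation-invariant, nearest-neighbor, frustration free quantum spin chain on $\mathbb{Z}$ with single-site spaces $\mathcal{H}_x=\mathbb{C}^d$, a fixed positive two-site interaction $h(x,x+1)\ge 0$, and local Hamiltonians $H(c,d)=\sum_{x=c}^{d-1}h(x,x+1)$ (notation as in the context). Suppose that $\varepsilon_{m,n}<1/2$ for some integers $n\ge m\ge 1$. Let $N\ge 2$ and $\psi\in\mathcal{G}(1,N)^\perp\subset \mathcal{H}_{[1,N]}$, and define $$\psi_1=(1-G(1,N-n))\psi,\qquad \psi_2=G(1,N-n)\psi,$$ so that $\psi=\psi_1+\psi_2$ (if $N\le n+1$, then $\psi_1=0$ and $\psi_2=\psi$). Then $$\langle\psi, H(1,N)\psi\rangle\ \ge\ \gamma_{m+n}\big(\alpha(\varepsilon_{m,n})\|\psi_1\|^2+\beta(\varepsilon_{m,n})\|\psi_2\|^2\big),$$ where $\alpha(\varepsilon)=(\sqrt{1-\varepsilon}-\sqrt{\varepsilon})^2$ and $\beta(\varepsilon)=\sqrt{1-\varepsilon}\,(\sqrt{1-\varepsilon}-\sqrt{\varepsilon})$.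
   Context: Setting: for each $x\in\mathbb{Z}$, $\mathcal{H}_x=\mathbb{C}^d$, and for a finite $\Lambda\subset\mathbb{Z}$, $\mathcal{H}_\Lambda=\bigotimes_{x\in\Lambda}\mathcal{H}_x$. A fixed positive operator $h$ on $\mathbb{C}^d\otimes\mathbb{C}^d$ gives $h(x,x+1)$ acting on sites $x,x+1$. For integers $c\le d$, $H(c,d)=\sum_{x=c}^{d-1}h(x,x+1)$, viewed as an operator on $\mathcal{H}_\Lambda$ for any interval $\Lambda\supset[c,d]$ (tensored with the identity elsewhere); $H(c,c)=0$. Frustration free means $\mathcal{G}(c,d):=\operatorname{Ker}H(c,d)\ne\{0\}$ for every interval $[c,d]$. $G(c,d)$ denotes the orthogonal projection onto $\mathcal{G}(c,d)$ (so $G(c,c)=1$; and by convention $G(1,k)=1$ for $k\le 1$). For $c<d$, the spectral gap $\gamma(c,d)$ is the largest number with $H(c,d)\ge\gamma(c,d)(1-G(c,d))$; it depends only on $d-c+1$. Set $\gamma_N=\min_{2\le k\le N}\gamma(1,k)$. For $m,n\ge 1$, on any $\mathcal{H}_{[a,b]}$ with $a\le -m$, $b\ge n$, define $$\varepsilon(m,n)=\sup\{\langle\psi,G(0,n)\psi\rangle:\ \psi\in\mathcal{G}(-m,0),\ \psi\in\mathcal{G}(-m,n)^\perp,\ \|\psi\|=1\},$$ (independent of $a,b$ and translation invariant), and $\varepsilon_{m,n}=\sup_{m'\ge m}\varepsilon(m',n)$. *)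

From HB Require Import structures.
From mathcomp Require Import all_boot all_order all_algebra.
From mathcomp Require Import boolp classical_sets reals.
From mathcomp.real_closed Require Import complex.

Set Implicit Arguments.
Unset Strict Implicit.
Unset Printing Implicit Defensive.

Import Order.TTheory GRing.Theory Num.Theory.
Local Open Scope ring_scope.
Local Open Scope complex_scope.

Section SpinChain.
Variable R : realType.
Local Notation C := (R[i]).
Variable d : nat.

(* Basis configurations of a chain of L sites (sites 0..L-1), each site C^d. *)
Definition conf (L : nat) := {ffun 'I_L -> 'I_d}.

(* Vectors of H_Lambda = (C^d)^{tensor L}, in the product basis. *)
Definition vec (L : nat) := {ffun conf L -> C}.

Definition dot (L : nat) (u v : vec L) : C := \sum_(s : conf L) (u s)^* * v s.

Definition nrm2 (L : nat) (u : vec L) : R := complex.Re (dot u u).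

(* Two-site operator h on C^d (x) C^d, given by its matrix entries h p q. *)
Definition two_site := ('I_d * 'I_d)%type -> ('I_d * 'I_d)%type -> C.

Definition positive_op (h : two_site) : Prop :=
  forall phi : ('I_d * 'I_d)%type -> C,
    0 <= \sum_(p : 'I_d * 'I_d) (phi p)^* * \sum_(q : 'I_d * 'I_d) h p q * phi q.

Definition upd (L : nat) (s : conf L) (j k : 'I_L) (a b : 'I_d) : conf L :=
  [ffun i => if i == j then a else if i == k then b else s i].

(* h(x,x+1) acting on sites x, x+1 of the chain of L sites (tensored with the
   identity elsewhere); it is 0 if x+1 is not a site. *)
Definition hop (h : two_site) (L x : nat) (psi : vec L) : vec L :=
  [ffun s : conf L => \sum_(j : 'I_L | val j == x) \sum_(k : 'I_L | val k == x.+1)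
      \sum_(a : 'I_d) \sum_(b : 'I_d) h (s j, s k) (a, b) * psi (upd s j k a b)].

(* H on the sites [i, j] (0-based) = sum_{x=i}^{j-1} h(x,x+1); empty if j <= i. *)
Definition Hchain (h : two_site) (L i j : nat) (psi : vec L) : vec L :=
  \sum_(i <= x < j) hop h x psi.

Definition kerH (h : two_site) (L i j : nat) : set (vec L) :=
  [set v | Hchain h i j v = 0].
Arguments kerH : clear implicits.

Definition oproj (L : nat) (V : set (vec L)) (x : vec L) : vec L :=
  xget 0 [set y | V y /\ forall v, V v -> dot v (x - y) = 0].

Definition Gproj (h : two_site) (L i j : nat) : vec L -> vec L :=
  oproj (kerH h L i j).
Arguments Gproj : clear implicits.

(* Frustration freeness: Ker H(c,d) <> {0} for every interval; by
   translation invariance it suffices to consider the full chain [0, L-1]. *)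
Definition frustration_free (h : two_site) : Prop :=
  forall L : nat, (0 < L)%N -> exists v : vec L, v != 0 /\ Hchain h 0 L.-1 v = 0.

(* gamma(1,k): the largest g with H(1,k) >= g (1 - G(1,k)) on H_[1,k]
   (sites 0..k-1). *)
Definition gap (h : two_site) (k : nat) : R :=
  sup [set g : R | forall phi : vec k,
         0 <= dot phi (Hchain h 0 k.-1 phi - g%:C *: (phi - Gproj h k 0 k.-1 phi))].

Definition gammaN (h : two_site) (N : nat) : R :=
  \big[Order.min/gap h 2]_(2 <= k < N.+1) gap h k.

(* epsilon(m,n), computed on Lambda = [-m, n]  (sites 0..m+n, original site 0
   is site m). *)
Definition eps (h : two_site) (m n : nat) : R :=
  sup [set e : R | exists psi : vec (m + n).+1,
         [/\ kerH h (m + n).+1 0 m psi,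
             (forall v, kerH h (m + n).+1 0 (m + n) v -> dot v psi = 0),
             dot psi psi = 1 &
             e%:C = dot psi (Gproj h (m + n).+1 m (m + n) psi)]].

Definition eps_sup (h : two_site) (m n : nat) : R :=
  sup [set e : R | exists m', (m <= m')%N /\ e = eps h m' n].

Definition alpha (e : R) : R := (Num.sqrt (1 - e) - Num.sqrt e) ^+ 2.
Definition beta (e : R) : R := Num.sqrt (1 - e) * (Num.sqrt (1 - e) - Num.sqrt e).

End SpinChain.
Arguments kerH {R d} h L i j.
Arguments Gproj {R d} h L i j.

From HB Require Import structures.
From mathcomp Require Import all_boot all_order all_algebra.
From mathcomp Require Import boolp classical_sets reals.
From mathcomp.real_closed Require Import complex.
From mathcomp Require Import ring lra zify.
Import Order.TTheory GRing.Theory Num.Theory.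
Local Open Scope complex_scope.
Local Open Scope ring_scope.

Set Implicit Arguments.
Unset Strict Implicit.
Unset Printing Implicit Defensive.

(* Write G(j) for the projection onto Ker H(1, j) and Q for the projection onto
   Ker H(N - n, N).  Since H(1, N) = H(1, N - n) + H(N - n, N), the energy of
   psi is bounded below by induction on N (in steps of n) for the first term,
   and by the gap, gamma_{n+1} |psi - Q psi|^2, for the second.  The two are
   linked through u = (G(N - n) - G(N)) psi and v = (G(N - 2n) - G(N - n)) psi:
   |psi - Q psi|^2 >= |u|^2 + |v|^2 - |Q (u + v)|^2, and Cauchy-Schwarz with
   |Q u|^2 <= eps |u|^2 bounds |Q (u + v)|^2 through an optimised quadratic
   inequality, which is where alpha(eps) and beta(eps) come from.  Statements
   about short chains (positivity, gap, eps) are transported into the long chain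
   by splitting configurations into a window and its complement. *)

Section ComplexFacts.
Variable R : realType.
Implicit Types x y : R[i].

Lemma ReJ x : complex.Re x^* = complex.Re x.
Proof. by case: x. Qed.

Lemma Re_realM (k : R) x : complex.Re (k%:C * x) = k * complex.Re x.
Proof. by case: x => a b /=; rewrite mul0r subr0. Qed.

Lemma conjC_real (k : R) : (k%:C)^* = k%:C.
Proof. by apply/eqP; rewrite eq_complex /= oppr0 !eqxx. Qed.

Lemma Re_ge0 x : 0 <= x -> 0 <= complex.Re x.
Proof. by rewrite lecE => /andP []. Qed.

Lemma ge0_complexE x : 0 <= x -> x = (complex.Re x)%:C.
Proof. by case: x => a b; rewrite lecE /= => /andP [/eqP -> _]. Qed.

End ComplexFacts.

Section InnerProduct.
Variables (R : realType) (d L : nat).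
Local Notation V := (vec R d L).
Implicit Types (u v w : V) (a : R[i]).

Fact dot_is_linear u : linear (dot u).
Proof.
move=> a v w; rewrite /dot scaler_sumr -big_split; apply: eq_bigr => s _ /=.
by rewrite !ffunE mulrDr mulrCA.
Qed.
HB.instance Definition _ u := GRing.isLinear.Build _ _ _ _ (dot u) (dot_is_linear u).

Lemma dotC u v : dot v u = (dot u v)^*.
Proof. by rewrite /dot rmorph_sum; apply: eq_bigr => s _; rewrite rmorphM /= conjCK mulrC. Qed.

Lemma dotZr a u v : dot u (a *: v) = a * dot u v.
Proof. exact: linearZ. Qed.

Lemma dotDl u v w : dot (u + v) w = dot u w + dot v w.
Proof. by rewrite dotC raddfD rmorphD /= -!dotC. Qed.
Lemma dotBl u v w : dot (u - v) w = dot u w - dot v w.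
Proof. by rewrite dotC raddfB rmorphB /= -!dotC. Qed.
Lemma dotZl a u v : dot (a *: u) v = a^* * dot u v.
Proof. by rewrite dotC dotZr rmorphM /= -dotC. Qed.
Lemma dot0l u : dot 0 u = 0.
Proof. by rewrite dotC raddf0 rmorph0. Qed.

Lemma dot_ge0 u : 0 <= dot u u.
Proof. by apply: sumr_ge0 => s _; rewrite mulrC mul_conjC_ge0. Qed.

Lemma dot_self u : dot u u = (nrm2 u)%:C.
Proof. exact/ge0_complexE/dot_ge0. Qed.

Lemma nrm2_ge0 u : 0 <= nrm2 u.
Proof. by have := dot_ge0 u; rewrite lecE => /andP []. Qed.

Lemma nrm2_eq0 u : nrm2 u = 0 -> u = 0.
Proof.
move=> u0; have /eqP : dot u u = 0 by rewrite dot_self u0.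
rewrite psumr_eq0 => [/allP uP|s _]; last by rewrite mulrC mul_conjC_ge0.
apply/ffunP => s; rewrite ffunE; apply/eqP.
by have /uP := mem_index_enum s; rewrite mulf_eq0 conjC_eq0 orbb.
Qed.

Lemma nrm2D u v : nrm2 (u + v) = nrm2 u + nrm2 v + 2 * complex.Re (dot u v).
Proof. by rewrite /nrm2 dotDl !raddfD /= (dotC u v) ReJ; ring. Qed.

Lemma nrm2D_orth u v : dot u v = 0 -> nrm2 (u + v) = nrm2 u + nrm2 v.
Proof. by move=> uv; rewrite nrm2D uv mulr0 addr0. Qed.

Lemma nrm2Z (k : R) u : nrm2 (k%:C *: u) = k ^+ 2 * nrm2 u.
Proof.
by rewrite /nrm2 dotZl dotZr conjC_real !Re_realM mulrA -expr2.
Qed.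

Lemma Re_dot_sqr_le u v : complex.Re (dot u v) ^+ 2 <= nrm2 u * nrm2 v.
Proof.
have [/nrm2_eq0 ->|vn0] := eqVneq (nrm2 v) 0.
  by rewrite /nrm2 !raddf0 /= expr0n mulr0.
have vp : 0 < nrm2 v by rewrite lt_def vn0 nrm2_ge0.
pose k := - (complex.Re (dot u v) / nrm2 v).
have E : (nrm2 u + k ^+ 2 * nrm2 v + 2 * (k * complex.Re (dot u v))) * nrm2 v =
         nrm2 u * nrm2 v - complex.Re (dot u v) ^+ 2.
  by rewrite /k; field; rewrite vn0.
have := nrm2_ge0 (u + k%:C *: v).
by rewrite nrm2D nrm2Z dotZr Re_realM -(ler_pM2r vp) mul0r E subr_ge0.
Qed.

End InnerProduct.

Section OrthogonalProjection.
Variables (R : realType) (d L : nat).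
Local Notation V := (vec R d L).
Implicit Types (u v w x y : V).

Lemma subrBB x y z : (x - y) - (x - z) = z - y.
Proof. by rewrite opprB addrC addrA subrK. Qed.

Lemma dot_sym_eq0 u v : dot u v = 0 -> dot v u = 0.
Proof. by move=> uv; rewrite dotC uv rmorph0. Qed.

Lemma span_orth_decomposition (S : seq V) x : exists y,
  {in S, forall s, dot s (x - y) = 0} /\
  forall v, {in S, forall s, dot v s = 0} -> dot v y = 0.
Proof.
elim: S x => [|w S IH] x; first by exists 0; split=> // v _; rewrite raddf0.
have [yx [xS yxS]] := IH x; have [yw [wS ywS]] := IH w.
set w' := w - yw.
have w'S : {in S, forall s, dot w' s = 0} by move=> s /wS /dot_sym_eq0.
pose c := dot w' x / (nrm2 w')%:C.
exists (yx + c *: w'); split=> [s|v vS]; last first.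
  have vS' : {in S, forall s, dot v s = 0} by move=> s sS; apply: vS; rewrite inE sS orbT.
  by rewrite linearD /= dotZr linearB /= yxS // ywS // vS ?mem_head // subrr mulr0 addr0.
rewrite inE opprD addrA => /predU1P [->|sS]; last first.
  by rewrite linearB /= dotZr xS // wS // mulr0 subr0.
have yw_x : dot yw (x - yx) = 0 by apply/dot_sym_eq0/ywS => t /xS /dot_sym_eq0.
have yw_w' : dot yw w' = 0 by apply/dot_sym_eq0/ywS.
rewrite -(subrK yw w) -/w' dotDl !(linearB (dot _) (x - yx)) /= !dotZr yw_x yw_w'.
rewrite linearB /= yxS // dot_self subr0 sub0r mulr0 oppr0 addr0.
have [w'0|w'n0] := eqVneq w' 0; first by rewrite w'0 /nrm2 !dot0l mulr0 subrr.
by rewrite /c mulfVK ?subrr //; apply: contra w'n0 => /eqP [/nrm2_eq0 ->].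
Qed.

Definition basis_vec (t : conf d L) : V := [ffun s => if s == t then 1 else 0].

Lemma vec_basis_expansion v : v = \sum_t v t *: basis_vec t.
Proof.
apply/ffunP => s; rewrite sum_ffunE (bigD1 s) //= big1 => [|t ts]; rewrite !ffunE.
  by rewrite eqxx addr0; apply/esym/mulr1.
by rewrite eq_sym (negbTE ts) scaler0.
Qed.

Definition adj_row (A : V -> V) (t : conf d L) : V := [ffun s => (A (basis_vec s) t)^*].

Lemma dot_adj_row (A : {linear V -> V}) t v : dot (adj_row A t) v = A v t.
Proof.
rewrite [in RHS](vec_basis_expansion v) linear_sum sum_ffunE /dot.
by apply: eq_bigr => s _; rewrite linearZ !ffunE conjCK mulrC.
Qed.

Section KernelProjection.
Variable A : {linear V -> V}.
Local Notation P := (oproj [set v | A v = 0]).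

(* [Ker A] is the orthogonal complement of the rows [adj_row A t], so removing
   from [x] its component in their span lands in [Ker A]. *)
Lemma proj_ker_spec x : A (P x) = 0 /\ forall v, A v = 0 -> dot v (x - P x) = 0.
Proof.
apply: (@xgetPex _ 0 [set y | A y = 0 /\ forall v, A v = 0 -> dot v (x - y) = 0]).
pose S := [seq adj_row A t | t <- enum (conf d L)].
have [y [yS yperp]] := span_orth_decomposition S x.
exists (x - y); split=> [|v /= Av].
  apply/ffunP => t; rewrite ffunE -dot_adj_row; apply: yS.
  by apply/mapP; exists t; rewrite ?mem_enum.
rewrite opprB addrC subrK; apply: yperp => _ /mapP [t _ ->].
by apply: dot_sym_eq0; rewrite dot_adj_row Av ffunE.
Qed.

Lemma proj_ker x : A (P x) = 0.
Proof. by case: (proj_ker_spec x). Qed.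

Lemma proj_orth x v : A v = 0 -> dot v (x - P x) = 0.
Proof. by case: (proj_ker_spec x) => _; apply. Qed.

Lemma proj_unique x y :
  A y = 0 -> (forall v, A v = 0 -> dot v (x - y) = 0) -> P x = y.
Proof.
move=> Ay yperp; apply/eqP; rewrite -subr_eq0; apply/eqP/nrm2_eq0.
have Ad : A (P x - y) = 0 by rewrite linearB /= proj_ker Ay subrr.
by rewrite /nrm2 -{2}(subrBB x y (P x)) linearB /= yperp // proj_orth // subrr.
Qed.

Lemma proj_id x : A x = 0 -> P x = x.
Proof. by move=> Ax; apply: proj_unique => // v _; rewrite subrr raddf0. Qed.

Lemma proj_eq0 x : (forall v, A v = 0 -> dot v x = 0) -> P x = 0.
Proof.
by move=> xperp; apply: proj_unique => [|v /xperp]; [exact: raddf0 | rewrite subr0].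
Qed.

Fact proj_is_linear : linear P.
Proof.
move=> a u v; apply: proj_unique => [|w Aw].
  by rewrite linearD linearZ /= !proj_ker scaler0 addr0.
have -> : a *: u + v - (a *: P u + P v) = a *: (u - P u) + (v - P v).
  by rewrite scalerBr addrACA opprD.
by rewrite linearD /= dotZr !proj_orth // mulr0 addr0.
Qed.

Lemma proj_dotl x v : A v = 0 -> dot v (P x) = dot v x.
Proof. by move=> Av; apply/eqP; rewrite eq_sym -subr_eq0 -linearB /= proj_orth. Qed.

Lemma proj_dotr x v : A v = 0 -> dot (P x) v = dot x v.
Proof. by move=> Av; rewrite dotC proj_dotl // -dotC. Qed.

Lemma proj_adjoint x y : dot (P x) y = dot x (P y).
Proof. by rewrite -(proj_dotl y (proj_ker x)) proj_dotr // proj_ker. Qed.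

Lemma proj_dot_self x : dot x (P x) = (nrm2 (P x))%:C.
Proof. by rewrite -dot_self proj_dotr // proj_ker. Qed.

Lemma dot_proj_compl x : dot x (x - P x) = (nrm2 (x - P x))%:C.
Proof.
have {1}-> : x = (x - P x) + P x by rewrite subrK.
by rewrite -dot_self dotDl [dot (P x) _]proj_orth ?addr0 ?proj_ker.
Qed.

Lemma nrm2_proj_pyth x : nrm2 x = nrm2 (P x) + nrm2 (x - P x).
Proof. by rewrite -nrm2D_orth ?subrKC // proj_orth // proj_ker. Qed.

Lemma nrm2_proj_le x : nrm2 (P x) <= nrm2 x.
Proof. by rewrite [leRHS]nrm2_proj_pyth lerDl nrm2_ge0. Qed.

End KernelProjection.

Lemma proj_proj_ker_sub (A B : {linear V -> V}) x :
  (forall v, A v = 0 -> B v = 0) ->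
  oproj [set v | A v = 0] (oproj [set v | B v = 0] x) = oproj [set v | A v = 0] x.
Proof.
move=> AB; apply: proj_unique => [|v Av]; first exact: proj_ker.
by rewrite -(subrBB x) linearB /= !proj_orth ?subrr //; apply: AB.
Qed.

End OrthogonalProjection.

Lemma big_ord_val (R : nmodType) (n x : nat) (lt_xn : (x < n)%N) (F : 'I_n -> R) :
  \sum_(j : 'I_n | val j == x) F j = F (Ordinal lt_xn).
Proof. by apply: big_pred1 => j /=; rewrite -val_eqE. Qed.

Section ChainOperators.
Variables (R : realType) (d : nat) (h : two_site R d) (L : nat).
Local Notation V := (vec R d L).

Fact hop_is_linear x : linear (@hop R d h L x).
Proof.
move=> a u v; apply/ffunP => s; rewrite !ffunE.
do 4 (rewrite scaler_sumr -big_split; apply: eq_bigr => ? _).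
by rewrite !ffunE mulrDr mulrCA.
Qed.
HB.instance Definition _ x := GRing.isLinear.Build _ _ _ _ (@hop R d h L x) (hop_is_linear x).

Fact Hchain_is_linear i j : linear (@Hchain R d h L i j).
Proof.
move=> a u v; rewrite /Hchain scaler_sumr -big_split.
by apply: eq_bigr => x _; rewrite linearP.
Qed.
HB.instance Definition _ i j :=
  GRing.isLinear.Build _ _ _ _ (@Hchain R d h L i j) (Hchain_is_linear i j).

HB.instance Definition _ i j :=
  GRing.isLinear.Build _ _ _ _ (Gproj h L i j) (proj_is_linear (@Hchain R d h L i j)).

Lemma Gproj_ker i j x : Hchain h i j (Gproj h L i j x) = 0.
Proof. exact: proj_ker. Qed.

Lemma Gproj_id i j (x : V) : Hchain h i j x = 0 -> Gproj h L i j x = x.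
Proof. exact: proj_id. Qed.

Lemma Gproj_orth i j x (y : V) : Hchain h i j y = 0 -> dot y (x - Gproj h L i j x) = 0.
Proof. exact: proj_orth. Qed.

Lemma nrm2_Gproj_pyth i j (x : V) :
  nrm2 x = nrm2 (Gproj h L i j x) + nrm2 (x - Gproj h L i j x).
Proof. exact: nrm2_proj_pyth. Qed.

Lemma Hchain_cat i k j (v : V) : (i <= k <= j)%N ->
  Hchain h i j v = Hchain h i k v + Hchain h k j v.
Proof. by move=> /andP [ik kj]; rewrite /Hchain (big_cat_nat ik kj). Qed.

End ChainOperators.

(* A chain of [k'.+1] sites sits inside the chain of [L] sites as the window
   [c, c + k'], and every configuration splits into its window part and its
   outer part, the window sites of the latter being reset to [a0]. *)
Section Window.
Variables (R : realType) (d : nat) (h : two_site R d) (a0 : 'I_d).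
Variables (L c k' : nat).
Hypothesis window_le : (c + k'.+1 <= L)%N.
Local Notation k := k'.+1.
Local Notation VL := (vec R d L).
Local Notation Vk := (vec R d k).

Definition in_window (i : nat) := (c <= i < c + k)%N.

Definition glue (s : conf d k) (r : conf d L) : conf d L :=
  [ffun i : 'I_L => if in_window i then s (inord (i - c)) else r i].

Definition outer (t : conf d L) : conf d L :=
  [ffun i : 'I_L => if in_window i then a0 else t i].

Lemma window_lt (j : 'I_k) : (c + j < L)%N.
Proof. by have := ltn_ord j; lia. Qed.

Definition window (t : conf d L) : conf d k := [ffun j => t (Ordinal (window_lt j))].

Definition fiber (r : conf d L) (u : VL) : Vk := [ffun s => u (glue s r)].

Fact fiber_is_linear r : linear (fiber r).
Proof. by move=> a u v; apply/ffunP => s; rewrite !ffunE. Qed.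
HB.instance Definition _ r := GRing.isLinear.Build _ _ _ _ (fiber r) (fiber_is_linear r).

Lemma inord_window (i : nat) : in_window i -> (inord (i - c) : 'I_k) = (i - c)%N :> nat.
Proof. by rewrite /in_window => iw; rewrite inordK //; lia. Qed.

Lemma window_glue s r : window (glue s r) = s.
Proof.
apply/ffunP => j; rewrite !ffunE /=.
have -> : in_window (c + j) by rewrite /in_window; have := ltn_ord j; lia.
by congr (s _); apply: val_inj; rewrite /= inordK; have := ltn_ord j; lia.
Qed.

Lemma outer_glue s r : outer (glue s r) = outer r.
Proof. by apply/ffunP => i; rewrite !ffunE; case: in_window. Qed.

Lemma glue_window t : glue (window t) (outer t) = t.
Proof.
apply/ffunP => i; rewrite !ffunE; case: (boolP (in_window i)) => iw //.
congr (t _); apply: val_inj => /=; rewrite inord_window //; move: iw; rewrite /in_window; lia.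
Qed.

Lemma outer_idem t : outer (outer t) = outer t.
Proof. by apply/ffunP => i; rewrite !ffunE; case: in_window. Qed.

Lemma sum_fibers (F : conf d L -> R[i]) :
  \sum_t F t = \sum_(r | outer r == r) \sum_s F (glue s r).
Proof.
rewrite (partition_big outer (fun r => outer r == r)) /=; last first.
  by move=> t _; rewrite outer_idem.
apply: eq_bigr => r /eqP rE.
rewrite (reindex_onto (glue^~ r) window) /=; last by move=> t /eqP <-; rewrite glue_window.
by apply: eq_bigl => s; rewrite outer_glue rE eqxx window_glue eqxx.
Qed.

Lemma dot_fibers (u v : VL) : dot u v = \sum_(r | outer r == r) dot (fiber r u) (fiber r v).
Proof.
rewrite /dot sum_fibers; apply: eq_bigr => r _.
by apply: eq_bigr => s _; rewrite !ffunE.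
Qed.

Lemma fibers_inj (u v : VL) : (forall r, outer r == r -> fiber r u = fiber r v) -> u = v.
Proof.
move=> uv; apply/ffunP => t; rewrite -(glue_window t).
have /ffunP/(_ (window t)) := uv (outer t) (introT eqP (outer_idem t)).
by rewrite !ffunE.
Qed.

Lemma upd_glue s r (x x1 : 'I_L) (y y1 : 'I_k) a b :
  y = (x - c)%N :> nat -> y1 = (x1 - c)%N :> nat -> in_window x -> in_window x1 ->
  upd (glue s r) x x1 a b = glue (upd s y y1 a b) r.
Proof.
move=> yx y1x1 xw x1w; apply/ffunP => i; rewrite !ffunE.
case: (boolP (in_window i)) => iw; last first.
  by rewrite !ifN //; apply: contraNneq iw => ->.
have shift (z : 'I_k) (w : 'I_L) : z = (w - c)%N :> nat -> in_window w ->
    (inord (i - c) == z) = (i == w).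
  move=> zw ww; rewrite -(inj_eq val_inj) /= inord_window // zw.
  apply/eqP/eqP => [e|-> //]; apply: val_inj => /=; move: iw ww e; rewrite /in_window; lia.
by rewrite (shift y x) // (shift y1 x1).
Qed.

Lemma fiber_hop x r u : (c <= x)%N -> (x.+1 < c + k)%N ->
  fiber r (hop h x u) = hop h (x - c) (fiber r u).
Proof.
move=> cx xk; apply/ffunP => s; rewrite !ffunE.
have l1 : (x < L)%N by lia.
have l2 : (x.+1 < L)%N by lia.
have l3 : (x - c < k)%N by lia.
have l4 : ((x - c).+1 < k)%N by lia.
rewrite (big_ord_val l1) (big_ord_val l2) (big_ord_val l3) (big_ord_val l4).
have i1 : in_window (Ordinal l1) by rewrite /in_window /=; lia.
have i2 : in_window (Ordinal l2) by rewrite /in_window /=; lia.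
have -> : glue s r (Ordinal l1) = s (Ordinal l3).
  by rewrite ffunE i1; congr (s _); apply: val_inj; rewrite /= inord_window.
have -> : glue s r (Ordinal l2) = s (Ordinal l4).
  by rewrite ffunE i2; congr (s _); apply: val_inj; rewrite /= inord_window //; lia.
apply: eq_bigr => a _; apply: eq_bigr => b _.
by rewrite ffunE (@upd_glue s r _ _ (Ordinal l3) (Ordinal l4)) //= subSn.
Qed.

Lemma fiber_Hchain i j r u : (j < k)%N ->
  fiber r (Hchain h (c + i) (c + j) u) = Hchain h i j (fiber r u).
Proof.
move=> jk; rewrite /Hchain linear_sum (addnC c i) (addnC c j) big_addn addnK.
by apply: eq_big_nat => y /andP [iy yj]; rewrite /= fiber_hop ?addnK //; lia.
Qed.

Lemma Hchain_eq0_fibers i j v : (j < k)%N ->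
  (forall r, outer r == r -> Hchain h i j (fiber r v) = 0) ->
  Hchain h (c + i) (c + j) v = 0.
Proof. by move=> jk H0; apply: fibers_inj => r rE; rewrite fiber_Hchain // H0 // raddf0. Qed.

Lemma fiber_Gproj i j r u : (j < k)%N -> outer r == r ->
  fiber r (Gproj h L (c + i) (c + j) u) = Gproj h k i j (fiber r u).
Proof.
move=> jk rE.
pose y : VL := [ffun t => Gproj h k i j (fiber (outer t) u) (window t)].
have fy r' : outer r' == r' -> fiber r' y = Gproj h k i j (fiber r' u).
  by move=> /eqP r'E; apply/ffunP => s; rewrite !ffunE outer_glue r'E window_glue.
suff -> : Gproj h L (c + i) (c + j) u = y by rewrite fy.
apply: proj_unique => [|v Hv].
  by apply: Hchain_eq0_fibers => // r' r'E; rewrite fy //; apply: proj_ker.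
rewrite dot_fibers big1 // => r' r'E.
by rewrite linearB /= fy //; apply: proj_orth; rewrite /= -fiber_Hchain // Hv raddf0.
Qed.

Definition embed (r0 : conf d L) (v : Vk) : VL :=
  [ffun t => if outer t == r0 then v (window t) else 0].

Lemma fiber_embed r r0 v : outer r == r ->
  fiber r (embed r0 v) = if r == r0 then v else 0.
Proof.
move=> /eqP rE; apply/ffunP => s; rewrite !ffunE outer_glue rE window_glue.
by case: eqP => // _; rewrite ffunE.
Qed.

Lemma dot_embed r0 v u : outer r0 == r0 -> dot (embed r0 v) u = dot v (fiber r0 u).
Proof.
move=> r0E; rewrite dot_fibers (bigD1 r0) //= big1 ?addr0 => [|r /andP [/eqP rE r0r]].
  by congr dot; apply/ffunP => s; rewrite !ffunE outer_glue (eqP r0E) eqxx window_glue.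
rewrite [fiber r _](_ : _ = 0) ?dot0l //; apply/ffunP => s.
by rewrite !ffunE outer_glue rE (negbTE r0r).
Qed.

Lemma neq_outside (i z : 'I_L) : in_window i -> ~~ in_window z -> (i == z) = false.
Proof. by move=> iw zw; apply: contraNF zw => /eqP <-. Qed.

Lemma outer_upd r (x x1 : 'I_L) a b : ~~ in_window x -> ~~ in_window x1 ->
  outer r == r -> outer (upd r x x1 a b) == upd r x x1 a b.
Proof.
move=> xw x1w /eqP rE; apply/eqP/ffunP => i; rewrite !ffunE.
case: (boolP (in_window i)) => iw //.
by rewrite !(neq_outside iw) // -rE ffunE iw.
Qed.

Lemma upd_glue_outside s r (x x1 : 'I_L) a b : ~~ in_window x -> ~~ in_window x1 ->
  upd (glue s r) x x1 a b = glue s (upd r x x1 a b).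
Proof.
move=> xw x1w; apply/ffunP => i; rewrite !ffunE.
case: (boolP (in_window i)) => iw //.
by rewrite !(neq_outside iw).
Qed.

Lemma fiber_hop_outside x r u (y y1 : 'I_L) :
  y = x :> nat -> y1 = x.+1 :> nat -> (x.+1 < c)%N ->
  fiber r (hop h x u) =
  \sum_(a < d) \sum_(b < d) h (r y, r y1) (a, b) *: fiber (upd r y y1 a b) u.
Proof.
move=> yx y1x xc.
have yw : ~~ in_window y by rewrite /in_window yx; lia.
have y1w : ~~ in_window y1 by rewrite /in_window y1x; lia.
have lx : (x < L)%N by lia.
have lx1 : (x.+1 < L)%N by lia.
apply/ffunP => s; rewrite !ffunE sum_ffunE (big_ord_val lx) (big_ord_val lx1).
have -> : Ordinal lx = y by apply: val_inj.
have -> : Ordinal lx1 = y1 by apply: val_inj.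
rewrite !ffunE (negbTE yw) (negbTE y1w); apply: eq_bigr => a _.
by rewrite sum_ffunE; apply: eq_bigr => b _; rewrite !ffunE upd_glue_outside.
Qed.

(* Hops left of the window only act on the outer configuration, while the
   window projection acts fibrewise, so the two commute. *)
Lemma fiber_hop_Gproj_outside x r u : (x.+1 < c)%N -> outer r == r ->
  fiber r (hop h x (Gproj h L c (c + k') u)) = Gproj h k 0 k' (fiber r (hop h x u)).
Proof.
move=> xc rE; have lx : (x < L)%N by lia.
have lx1 : (x.+1 < L)%N by lia.
have xw : ~~ in_window (Ordinal lx) by rewrite /in_window /=; lia.
have x1w : ~~ in_window (Ordinal lx1) by rewrite /in_window /=; lia.
rewrite !(@fiber_hop_outside x r _ (Ordinal lx) (Ordinal lx1)) // !linear_sum.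
apply: eq_bigr => a _; rewrite linear_sum; apply: eq_bigr => b _.
have -> : Gproj h L c (c + k') = Gproj h L (c + 0) (c + k') by rewrite addn0.
by rewrite linearZ /= fiber_Gproj ?outer_upd.
Qed.

Lemma Hchain_Gproj_outside i j y : (j < c)%N -> Hchain h i j y = 0 ->
  Hchain h i j (Gproj h L c (c + k') y) = 0.
Proof.
move=> jc Hy; apply: fibers_inj => r rE; rewrite raddf0 /Hchain !linear_sum /=.
rewrite big_nat_cond (eq_bigr (fun x => Gproj h k 0 k' (fiber r (hop h x y)))); last first.
  by move=> x /andP [/andP [_ xj] _]; apply: fiber_hop_Gproj_outside => //; lia.
by rewrite -big_nat_cond -linear_sum -linear_sum -/(Hchain h i j y) Hy !raddf0.
Qed.

End Window.

Section PositiveOperator.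
Variables (R : realType) (d L : nat) (A : {linear vec R d L -> vec R d L}).
Hypothesis A_psd : forall phi, 0 <= dot phi (A phi).

(* Polarization: the cross terms [z * a + z^* * b] are real for every [z], and
   [z = 1], [z = 'i] give [a = b^*]. *)
Lemma psd_adjoint x y : dot x (A y) = (dot y (A x))^*.
Proof.
have q_real u : (dot u (A u))^* = dot u (A u) by apply/conj_Creal/ger0_real.
set a := dot x (A y); set b := dot y (A x).
have cross_real z : (z * a + z^* * b)^* = z * a + z^* * b.
  have -> : z * a + z^* * b =
      dot (x + z *: y) (A (x + z *: y)) - dot x (A x) - z^* * z * dot y (A y).
    by rewrite linearD linearZ /= dotDl dotZl !linearD /= !dotZr -/a -/b; ring.
  by rewrite !rmorphB !rmorphM /= !q_real conjCK [z * _]mulrC.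
have E1 : a^* - b = a - b^*.
  have := cross_real 1; rewrite rmorph1 rmorphD !rmorphM /= rmorph1 => /eqP.
  by rewrite -subr_eq0 => /eqP E; apply/eqP; rewrite -subr_eq0 -E; apply/eqP; ring.
have E2 : - (a^* - b) = a - b^*.
  have := cross_real 'i; rewrite rmorphD !rmorphM /= conjCK conjCi => /eqP.
  rewrite -subr_eq0 => /eqP E; apply: (mulfI (neq0Ci _)).
  by apply/eqP; rewrite -subr_eq0 -E; apply/eqP; ring.
by rewrite E1 in E2; apply/eqP; rewrite -subr_eq0 -eqNr E2.
Qed.

(* Otherwise the form would be negative at [A v - t v] for a large real [t]. *)
Lemma psd_ker v : dot v (A v) = 0 -> A v = 0.
Proof.
set w := A v => qv; apply: nrm2_eq0; apply/eqP; apply: contraT => wn0.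
have quad (t : R) : dot (w - t%:C *: v) (A (w - t%:C *: v)) =
    dot w (A w) - (t * nrm2 w)%:C *+ 2.
  have -> : A (w - t%:C *: v) = A w - t%:C *: w by rewrite linearB linearZ.
  rewrite dotBl !linearB /= !dotZl !dotZr qv (psd_adjoint v w).
  by rewrite -/w dot_self !conjC_real !mulr0 oppr0 subr0 rmorphM /=; ring.
pose t := (complex.Re (dot w (A w)) + 1) / (2 * nrm2 w).
have := A_psd (w - t%:C *: v); rewrite quad lecE => /andP [_].
rewrite raddfB raddfMn /= (_ : t * nrm2 w *+ 2 = complex.Re (dot w (A w)) + 1).
  by rewrite subr_ge0 gerDl ler10.
by rewrite /t -mulr_natr; field; rewrite wn0.
Qed.

End PositiveOperator.

Section ChainPositivity.
Variables (R : realType) (d : nat) (h : two_site R d) (a0 : 'I_d).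
Hypothesis h_psd : positive_op h.

Definition pair_conf (a b : 'I_d) : conf d 2 := [ffun i : 'I_2 => if i == ord0 then a else b].

Lemma pair_confK (s : conf d 2) : pair_conf (s ord0) (s ord_max) = s.
Proof.
apply/ffunP => i; rewrite !ffunE; case: ifP => [/eqP -> //|].
by case: i => [[|[|n]] lt_i2] //= _; congr (s _); apply: val_inj.
Qed.

Lemma dot_hop_two_sites_ge0 (phi : vec R d 2) : 0 <= dot phi (hop h 0 phi).
Proof.
pose Phi (p : 'I_d * 'I_d) := phi (pair_conf p.1 p.2).
suff -> : dot phi (hop h 0 phi) =
    \sum_(p : 'I_d * 'I_d) (Phi p)^* * \sum_q h p q * Phi q by apply: h_psd.
rewrite /dot (reindex (fun p : 'I_d * 'I_d => pair_conf p.1 p.2)) /=; last first.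
  by exists (fun s => (s ord0, s ord_max)) => [[a b] _|s _]; rewrite ?pair_confK // !ffunE.
apply: eq_bigr => [[a b]] _; rewrite ffunE (big_ord_val (ltn0Sn 1)) (big_ord_val (ltnSn 1)).
rewrite !ffunE /= pair_big /=; congr (_ * _); apply: eq_bigr => [[a' b']] _.
by congr (_ * phi _); apply/ffunP => i; rewrite !ffunE; case: i => [[|[|n]] ?].
Qed.

Lemma hop_outside L x (phi : vec R d L) : (L <= x.+1)%N -> hop h x phi = 0.
Proof.
move=> Lx; apply/ffunP => s; rewrite !ffunE big1 // => j _.
by rewrite big_pred0 // => k; apply/negbTE/eqP => /= kx; have := ltn_ord k; lia.
Qed.

Lemma dot_hop_ge0 L x (phi : vec R d L) : 0 <= dot phi (hop h x phi).
Proof.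
have [xL|Lx] := ltnP x.+1 L; last by rewrite hop_outside // raddf0.
have win : (x + 2 <= L)%N by lia.
rewrite (dot_fibers a0 win); apply: sumr_ge0 => r _.
by rewrite fiber_hop // ?subnn ?dot_hop_two_sites_ge0 //; lia.
Qed.

Lemma dot_Hchain_ge0 L i j (phi : vec R d L) : 0 <= dot phi (Hchain h i j phi).
Proof. by rewrite /Hchain linear_sum; apply: sumr_ge0 => x _; apply: dot_hop_ge0. Qed.

Lemma Hchain_ker_sub L i i' j' j (v : vec R d L) :
  (i <= i' <= j')%N -> (j' <= j)%N -> Hchain h i j v = 0 -> Hchain h i' j' v = 0.
Proof.
move=> /andP [ii' i'j'] j'j Hv; apply: (psd_ker (dot_Hchain_ge0 i' j')).
have /eqP := congr1 (dot v) Hv.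
rewrite (@Hchain_cat _ _ _ _ i i') ?ii' ?(leq_trans i'j' j'j) //.
rewrite (@Hchain_cat _ _ _ _ i' j') ?i'j' //.
rewrite !linearD /= raddf0 paddr_eq0 ?addr_ge0 ?dot_Hchain_ge0 // => /andP [_].
by rewrite paddr_eq0 ?dot_Hchain_ge0 // => /andP [/eqP].
Qed.

Lemma Hchain_ker_prefix L j' j (v : vec R d L) :
  (j' <= j)%N -> Hchain h 0 j v = 0 -> Hchain h 0 j' v = 0.
Proof. exact: Hchain_ker_sub. Qed.

Lemma nrm2_compl_Gproj_nested L j' j (x : vec R d L) : (j' <= j)%N ->
  nrm2 (x - Gproj h L 0 j x) =
  nrm2 (x - Gproj h L 0 j' x) + nrm2 (Gproj h L 0 j' x - Gproj h L 0 j x).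
Proof.
move=> j'j; have G'G : Gproj h L 0 j' (Gproj h L 0 j x) = Gproj h L 0 j x.
  exact/Gproj_id/(Hchain_ker_prefix j'j (Gproj_ker _ _ _ _)).
rewrite (nrm2_Gproj_pyth h 0 j' (x - Gproj h L 0 j x)) linearB /= G'G [LHS]addrC.
by rewrite opprB addrA subrK.
Qed.

End ChainPositivity.

Section GapAndEps.
Variables (R : realType) (d : nat) (h : two_site R d) (a0 : 'I_d).
Hypothesis h_psd : positive_op h.

Lemma gap_ge0 k : 0 <= gap h k.
Proof.
rewrite /gap; set E := (X in sup X).
have E0 : E 0 by move=> phi; rewrite scale0r subr0 dot_Hchain_ge0.
have [[_ Eub]|Enosup] := pselect (has_sup E); last by rewrite sup_out.
exact: ub_le_sup.
Qed.

Lemma gammaN_ge0 N : 0 <= gammaN h N.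
Proof. by apply: le_bigmin => [|k _]; apply: gap_ge0. Qed.

Lemma gammaN_le_gap N k : (2 <= k <= N)%N -> gammaN h N <= gap h k.
Proof. by move=> kN; apply: ge_bigmin_seq; rewrite // mem_index_iota; lia. Qed.

Lemma gap_le k (phi : vec R d k) :
  gap h k * nrm2 (phi - Gproj h k 0 k.-1 phi) <=
  complex.Re (dot phi (Hchain h 0 k.-1 phi)).
Proof.
set n := nrm2 _; have [->|n0] := eqVneq n 0; first by rewrite mulr0 Re_ge0 ?dot_Hchain_ge0.
have np : 0 < n by rewrite lt_def n0 nrm2_ge0.
rewrite -ler_pdivlMr //; apply: ge_sup => [|g /(_ phi)].
  by exists 0 => psi; rewrite scale0r subr0 dot_Hchain_ge0.
rewrite linearB /= dotZr dot_proj_compl lecE => /andP [_].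
by rewrite raddfB /= mul0r subr0 subr_ge0 ler_pdivlMr.
Qed.

Lemma gap_le_window L c k' (psi : vec R d L) : (c + k'.+1 <= L)%N ->
  gap h k'.+1 * nrm2 (psi - Gproj h L c (c + k') psi) <=
  complex.Re (dot psi (Hchain h c (c + k') psi)).
Proof.
move=> win; rewrite -[in Gproj _ _ c](addn0 c) -[in Hchain _ c](addn0 c).
rewrite /nrm2 !(dot_fibers a0 win) !raddf_sum mulr_sumr; apply: ler_sum => r rE.
by rewrite fiber_Hchain // linearB /= (fiber_Gproj _ win _ _ _ rE) //; apply: gap_le.
Qed.

Lemma eps_candidate_bound m n e : (exists psi : vec R d (m + n).+1,
    [/\ kerH h (m + n).+1 0 m psi,
        (forall v, kerH h (m + n).+1 0 (m + n) v -> dot v psi = 0),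
        dot psi psi = 1 &
        e%:C = dot psi (Gproj h (m + n).+1 m (m + n) psi)]) -> 0 <= e <= 1.
Proof.
move=> [psi [_ _ psi1 /(congr1 (@complex.Re R)) /= ->]]; rewrite proj_dot_self /=.
by rewrite nrm2_ge0 -[1](congr1 (@complex.Re R) psi1) /= -/(nrm2 psi) nrm2_proj_le.
Qed.

Lemma eps_ge0 m n : 0 <= eps h m n.
Proof.
rewrite /eps; set E := (X in sup X).
have [[e Ee]|E0] := pselect (exists e, E e); last first.
  by rewrite sup_out // => -[[e Ee] _]; apply: E0; exists e.
have /andP [e0 _] := eps_candidate_bound Ee.
apply: le_trans e0 _; apply: ub_le_sup Ee.
by exists 1 => e' /eps_candidate_bound /andP [].
Qed.

Lemma eps_le1 m n : eps h m n <= 1.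
Proof.
rewrite /eps; set E := (X in sup X).
have [[e Ee]|E0] := pselect (exists e, E e); last first.
  by rewrite sup_out // => -[[e Ee] _]; apply: E0; exists e.
by apply: ge_sup => [|e' /eps_candidate_bound /andP []]; first by exists e.
Qed.

Lemma eps_le_sup m m' n : (m <= m')%N -> eps h m' n <= eps_sup h m n.
Proof.
move=> mm'; apply: ub_le_sup; last by exists m'.
by exists 1 => e [m'' [_ ->]]; apply: eps_le1.
Qed.

Lemma eps_sup_ge0 m n : 0 <= eps_sup h m n.
Proof. exact: le_trans (eps_ge0 m n) (eps_le_sup _ (leqnn m)). Qed.

Lemma eps_bound m n (u : vec R d (m + n).+1) :
  Hchain h 0 m u = 0 -> (forall v, Hchain h 0 (m + n) v = 0 -> dot v u = 0) ->
  complex.Re (dot u (Gproj h _ m (m + n) u)) <= eps h m n * nrm2 u.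
Proof.
move=> Hu uperp; have [/nrm2_eq0 ->|un0] := eqVneq (nrm2 u) 0.
  by rewrite /nrm2 !dot0l /= mulr0.
have up : 0 < nrm2 u by rewrite lt_def un0 nrm2_ge0.
pose a := (Num.sqrt (nrm2 u))^-1.
have a2u : a ^+ 2 * nrm2 u = 1 by rewrite /a exprVn sqr_sqrtr ?nrm2_ge0 // mulVf.
pose psi := a%:C *: u.
have psi_quad : complex.Re (dot psi (Gproj h _ m (m + n) psi)) =
    a ^+ 2 * complex.Re (dot u (Gproj h _ m (m + n) u)).
  by rewrite /psi linearZ /= dotZl dotZr conjC_real !Re_realM mulrA -expr2.
rewrite -[X in X <= _]mul1r -a2u mulrAC ler_pM2r // -psi_quad.
apply: ub_le_sup; first by exists 1 => e /eps_candidate_bound /andP [].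
exists psi; split.
- by rewrite /kerH /= /psi linearZ /= Hu scaler0.
- by move=> v Kv; rewrite /psi dotZr uperp // mulr0.
- by rewrite dot_self /psi nrm2Z a2u.
- by rewrite proj_dot_self.
Qed.

Lemma eps_bound_window L m n (u : vec R d L) : ((m + n).+1 <= L)%N ->
  Hchain h 0 m u = 0 -> (forall v, Hchain h 0 (m + n) v = 0 -> dot v u = 0) ->
  complex.Re (dot u (Gproj h L m (m + n) u)) <= eps h m n * nrm2 u.
Proof.
move=> win Hu uperp.
have win0 : (0 + (m + n).+1 <= L)%N by [].
rewrite /nrm2 !(dot_fibers a0 win0) !raddf_sum mulr_sumr; apply: ler_sum => r rE.
rewrite -[in Gproj _ _ m](add0n m) (fiber_Gproj _ win0 _ _ _ rE) //.
apply: eps_bound => [|v Hv].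
  by rewrite -fiber_Hchain ?add0n ?Hu ?raddf0 //; lia.
rewrite -(dot_embed win0 v u rE); apply: uperp.
apply: (Hchain_eq0_fibers (a0 := a0) win0) => // r' r'E.
by rewrite fiber_embed //; case: eqP => // _; rewrite raddf0.
Qed.

End GapAndEps.

Section ScalarInequalities.
Variable R : realType.
Implicit Types (e A B X x y p a b : R).

Lemma le_of_sqr_le x y : 0 <= y -> x ^+ 2 <= y ^+ 2 -> x <= y.
Proof.
move=> y0 xy; case: (lerP x y) => // yx.
have : y ^+ 2 < x ^+ 2 by nra.
by rewrite ltNge xy.
Qed.

Lemma psd_binary_form (c c' C : R) a b : 0 <= c -> 0 <= c' -> C ^+ 2 <= c * c' ->
  0 <= c * b ^+ 2 + c' * a ^+ 2 - 2 * C * a * b.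
Proof.
move=> c_ge0 c'_ge0 det_ge0; have [c_0|c_neq0] := eqVneq c 0.
  have -> : C = 0 by apply/eqP; rewrite -sqrf_eq0 eq_le sqr_ge0 andbT -(mul0r c') -c_0.
  by rewrite c_0 mul0r mulr0 !mul0r add0r subr0 mulr_ge0 ?sqr_ge0.
have c_gt0 : 0 < c by rewrite lt_def c_neq0.
rewrite -(pmulr_rge0 _ c_gt0).
have -> : c * (c * b ^+ 2 + c' * a ^+ 2 - 2 * C * a * b) =
    (c * b - C * a) ^+ 2 + (c * c' - C ^+ 2) * a ^+ 2 by ring.
by rewrite addr_ge0 ?sqr_ge0 // mulr_ge0 ?sqr_ge0 ?subr_ge0.
Qed.

(* The left-hand side minus the right-hand side is a binary quadratic form in
   [(b, a)] whose determinant condition reduces to [(1 - 2 e) X (e X - p) >= 0]. *)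
Lemma sqrt_split_sqr_le e X p a b : 0 <= e <= 2^-1 -> 0 <= X -> 0 <= p <= e * X ->
  (Num.sqrt p * b + Num.sqrt (X - p) * a) ^+ 2 <=
  X * ((Num.sqrt (1 - e) + Num.sqrt e) * (Num.sqrt e * b ^+ 2 + Num.sqrt (1 - e) * a ^+ 2)).
Proof.
move=> /andP [e0 e_half] X0 /andP [p0 peX].
set s := Num.sqrt (1 - e); set t := Num.sqrt e.
set P := Num.sqrt p; set Y := Num.sqrt (X - p).
have s2 : s ^+ 2 = 1 - e by rewrite sqr_sqrtr //; lra.
have t2 : t ^+ 2 = e by rewrite sqr_sqrtr.
have P2 : P ^+ 2 = p by rewrite sqr_sqrtr.
have Y2 : Y ^+ 2 = X - p by rewrite sqr_sqrtr // subr_ge0; nra.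
have [s0 t0] : 0 <= s /\ 0 <= t by split; apply: sqrtr_ge0.
have ts : t <= s by apply: le_of_sqr_le; rewrite // s2 t2; lra.
rewrite -subr_ge0.
have -> : X * ((s + t) * (t * b ^+ 2 + s * a ^+ 2)) - (P * b + Y * a) ^+ 2 =
    ((s * t + t ^+ 2) * X - P ^+ 2) * b ^+ 2 + ((s ^+ 2 + s * t) * X - Y ^+ 2) * a ^+ 2
    - 2 * (P * Y) * a * b by ring.
have st_ge0 : 0 <= s * t * X by rewrite !mulr_ge0.
have e_st : 0 <= (s * t - e) * X by rewrite mulr_ge0 // subr_ge0 -t2 ler_wpM2r.
have st2 : (s * t) ^+ 2 = e * (1 - e) by rewrite exprMn s2 t2 mulrC.
apply: psd_binary_form; rewrite ?exprMn ?P2 ?Y2 ?t2 ?s2; [lra | lra |].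
rewrite -subr_ge0.
have -> : ((s * t + e) * X - p) * ((1 - e + s * t) * X - (X - p)) - p * (X - p) =
    (1 - 2 * e) * X * (e * X - p) + ((s * t) ^+ 2 - e * (1 - e)) * X ^+ 2 by ring.
by rewrite st2 subrr mul0r addr0 !mulr_ge0 //; lra.
Qed.

Lemma split_sum_le e A B X x y p : 0 <= e <= 2^-1 -> 0 <= A -> 0 <= B -> 0 <= X ->
  0 <= p <= e * X -> X = x + y -> x ^+ 2 <= p * B -> y ^+ 2 <= (X - p) * A ->
  X <= (Num.sqrt (1 - e) + Num.sqrt e) * (Num.sqrt e * B + Num.sqrt (1 - e) * A).
Proof.
move=> e_bounds A0 B0 X0 p_bounds Xxy xp yp.
have /andP [e0 _] := e_bounds; have /andP [p0 peX] := p_bounds.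
have xPb : x <= Num.sqrt p * Num.sqrt B.
  by apply: le_of_sqr_le; rewrite ?mulr_ge0 ?sqrtr_ge0 // exprMn !sqr_sqrtr.
have yYa : y <= Num.sqrt (X - p) * Num.sqrt A.
  by apply: le_of_sqr_le; rewrite ?mulr_ge0 ?sqrtr_ge0 // exprMn !sqr_sqrtr // subr_ge0; nra.
have := sqrt_split_sqr_le (Num.sqrt A) (Num.sqrt B) e_bounds X0 p_bounds.
rewrite !sqr_sqrtr // => MK.
have [->|X_neq0] := eqVneq X 0; first by rewrite mulr_ge0 ?addr_ge0 ?mulr_ge0 ?sqrtr_ge0.
have X_gt0 : 0 < X by rewrite lt_def X_neq0.
rewrite -(ler_pM2l X_gt0); apply: le_trans MK; nra.
Qed.

Lemma alpha_le1 e : 0 <= e <= 1 -> alpha e <= 1.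
Proof.
move=> /andP [e0 e1]; have st0 := mulr_ge0 (sqrtr_ge0 (1 - e)) (sqrtr_ge0 e).
by rewrite /alpha sqrrB !sqr_sqrtr ?subr_ge0 //; lra.
Qed.

Lemma beta_le1 e : 0 <= e <= 1 -> beta e <= 1.
Proof.
move=> /andP [e0 e1]; have st0 := mulr_ge0 (sqrtr_ge0 (1 - e)) (sqrtr_ge0 e).
by rewrite /beta mulrBr -expr2 sqr_sqrtr ?subr_ge0 //; lra.
Qed.

(* With [s = sqrt (1 - e)] and [t = sqrt e]: [1 - beta e = t (s + t)] and
   [1 + beta e - alpha e = s (s + t)]. *)
Lemma beta_le_of_split_sum_le e A B X : 0 <= e <= 1 ->
  X <= (Num.sqrt (1 - e) + Num.sqrt e) * (Num.sqrt e * B + Num.sqrt (1 - e) * A) ->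
  beta e * B <= (beta e - alpha e) * A + (A + B - X).
Proof.
move=> /andP [e0 e1]; rewrite /alpha /beta.
set s := Num.sqrt (1 - e); set t := Num.sqrt e => XK.
have s2 : s ^+ 2 = 1 - e by rewrite sqr_sqrtr ?subr_ge0.
have t2 : t ^+ 2 = e by rewrite sqr_sqrtr.
rewrite -subr_ge0 (_ : _ - _ =
  (s + t) * (t * B + s * A) - X + (1 - s ^+ 2 - t ^+ 2) * (A + B)).
  by rewrite s2 t2; lra.
by ring.
Qed.

End ScalarInequalities.

Section LocalGapStep.
Variables (R : realType) (d : nat) (h : two_site R d) (a0 : 'I_d).
Hypothesis h_psd : positive_op h.
Variables (m n L j1 j2 : nat) (psi : vec R d L).
Hypotheses (j12 : (j1 < j2)%N) (mj2 : (m <= j2)%N) (j2L : (j2 + n < L)%N).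
Local Notation V := (vec R d L).
Local Notation G j := (Gproj h L 0 j).
Local Notation Q := (Gproj h L j2 (j2 + n)).
Local Notation u := (G j2 psi - G (j2 + n) psi).
Local Notation v := (G j1 psi - G j2 psi).
Local Notation phi := (G j1 psi - G (j2 + n) psi).

Lemma ker_window (y : V) : Hchain h 0 (j2 + n) y = 0 -> Hchain h j2 (j2 + n) y = 0.
Proof. by apply: Hchain_ker_sub => //; rewrite leq_addr. Qed.

Lemma phi_ker : Hchain h 0 j1 phi = 0.
Proof.
rewrite linearB /= Gproj_ker.
by rewrite (Hchain_ker_prefix a0 h_psd _ (Gproj_ker _ _ _ _)) ?subrr //; lia.
Qed.

(* [phi - Q phi] lies in the kernel of [Hchain h 0 j1], which [Q] preserves and to
   which [psi - G j1 psi] is orthogonal; hence [psi - Q psi] splits orthogonally. *)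
Lemma nrm2_compl_phi_le : nrm2 (phi - Q phi) <= nrm2 (psi - Q psi).
Proof.
set z1 := phi - Q phi; have window_le : (j2 + n.+1 <= L)%N by rewrite addnS.
have z1_ker : Hchain h 0 j1 z1 = 0.
  by rewrite linearB /= phi_ker (Hchain_Gproj_outside a0 window_le j12 phi_ker) subrr.
have Qz1_ker := Hchain_Gproj_outside a0 window_le j12 z1_ker.
have Qfix : Q (G (j2 + n) psi) = G (j2 + n) psi by exact/Gproj_id/ker_window/Gproj_ker.
have -> : psi - Q psi = z1 + ((psi - G j1 psi) - Q (psi - G j1 psi)).
  have phiw : phi + (psi - G j1 psi) = psi - G (j2 + n) psi.
    by rewrite addrC addrA subrK.
  rewrite addrACA -opprD -linearD /= phiw linearB /= Qfix.
  by rewrite opprB addrA subrK.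
rewrite nrm2D_orth ?lerDl ?nrm2_ge0 // linearB /= -proj_adjoint.
by rewrite !Gproj_orth // subrr.
Qed.

Lemma phiE : phi = v + u.
Proof. by rewrite addrA subrK. Qed.

Lemma u_ker : Hchain h 0 j2 u = 0.
Proof.
rewrite linearB /= Gproj_ker.
by rewrite (Hchain_ker_prefix a0 h_psd _ (Gproj_ker _ _ _ _)) ?subrr ?leq_addr.
Qed.

Lemma u_perp (y : V) : Hchain h 0 (j2 + n) y = 0 -> dot y u = 0.
Proof.
move=> Hy; rewrite linearB /= !proj_dotl ?subrr //.
by apply: (Hchain_ker_prefix a0 h_psd _ Hy); rewrite leq_addr.
Qed.

Lemma v_perp (y : V) : Hchain h 0 j2 y = 0 -> dot y v = 0.
Proof.
move=> Hy; rewrite -[G j2 psi](proj_proj_ker_sub (A := Hchain h 0 j2) (B := Hchain h 0 j1)).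
  exact: Gproj_orth.
by move=> z; apply: (Hchain_ker_prefix a0 h_psd); apply: ltnW.
Qed.

Lemma nrm2_compl_phi : nrm2 (phi - Q phi) = nrm2 v + nrm2 u - nrm2 (Q phi).
Proof.
have := nrm2_Gproj_pyth h j2 (j2 + n) phi.
rewrite {1}phiE nrm2D_orth; last exact/dot_sym_eq0/v_perp/u_ker.
by move=> ->; rewrite [RHS]addrAC subrr add0r.
Qed.

Local Notation e := (eps_sup h m n).

Lemma nrm2_Q_le : nrm2 (Q u) <= e * nrm2 u.
Proof.
have := eps_bound_window a0 j2L u_ker u_perp; rewrite proj_dot_self /=.
by move/le_trans; apply; rewrite ler_wpM2r ?nrm2_ge0 ?eps_le_sup.
Qed.

Lemma nrm2_Q_phi_le : 0 <= e <= 2^-1 ->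
  nrm2 (Q phi) <=
  (Num.sqrt (1 - e) + Num.sqrt e) * (Num.sqrt e * nrm2 u + Num.sqrt (1 - e) * nrm2 v).
Proof.
move=> e_bounds; have /andP [e0 _] := e_bounds.
have Qphi_ker : Hchain h j2 (j2 + n) (Q phi) = 0 by apply: Gproj_ker.
set X := nrm2 (Q phi); set p := nrm2 (G j2 (Q phi)).
set x := complex.Re (dot (Q phi) u); set y := complex.Re (dot (Q phi) v).
have Xxy : X = x + y.
  by rewrite /x /y addrC -raddfD /= -linearD /= -phiE -(proj_dotl phi Qphi_ker).
have x_eps : x ^+ 2 <= X * (e * nrm2 u).
  rewrite /x -(proj_dotl u Qphi_ker); apply: le_trans (Re_dot_sqr_le _ _) _.
  by rewrite ler_wpM2l ?nrm2_ge0 ?nrm2_Q_le.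
have x_p : x ^+ 2 <= p * nrm2 u by rewrite /x -(proj_dotr (Q phi) u_ker) Re_dot_sqr_le.
have y_p : y ^+ 2 <= (X - p) * nrm2 v.
  have -> : X - p = nrm2 (Q phi - G j2 (Q phi)).
    by rewrite /X /p (nrm2_Gproj_pyth h 0 j2 (Q phi)) [nrm2 _ + _]addrC addrK.
  have -> : y = complex.Re (dot (Q phi - G j2 (Q phi)) v).
    by rewrite /y dotBl (v_perp (Gproj_ker h 0 j2 (Q phi))) subr0.
  exact: Re_dot_sqr_le.
have [X0 p0 A0 B0] : [/\ 0 <= X, 0 <= p, 0 <= nrm2 v & 0 <= nrm2 u] by rewrite !nrm2_ge0.
have [p_le|p_gt] := lerP p (e * X).
  by apply: (split_sum_le e_bounds A0 B0 X0 _ Xxy x_p y_p); rewrite p0 p_le.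
apply: (split_sum_le (p := e * X) e_bounds A0 B0 X0 _ Xxy).
- by rewrite lexx andbT mulr_ge0.
- by rewrite [e * X]mulrC -mulrA.
- by apply: le_trans y_p _; rewrite ler_wpM2r // lerD2l lerN2 ltW.
Qed.

Lemma local_gap_step : e < 2^-1 ->
  beta e * nrm2 u <= (beta e - alpha e) * nrm2 v + nrm2 (psi - Q psi).
Proof.
move=> e_half; have e0 := eps_sup_ge0 h m n.
have e_le_half : 0 <= e <= 2^-1 by rewrite e0 ltW.
have e_le1 : 0 <= e <= 1 by rewrite e0 (le_trans (ltW e_half)) // invf_le1 ?ler1n.
apply: le_trans (beta_le_of_split_sum_le e_le1 (nrm2_Q_phi_le e_le_half)) _.
by rewrite lerD2l -nrm2_compl_phi nrm2_compl_phi_le.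
Qed.

End LocalGapStep.

Section EnergyBound.
Variables (R : realType) (d : nat) (h : two_site R d) (a0 : 'I_d).
Hypothesis h_psd : positive_op h.
Variables (m n L : nat).
Hypotheses (m_gt0 : (0 < m)%N) (mn : (m <= n)%N) (e_half : eps_sup h m n < 2^-1).
Local Notation V := (vec R d L).
Local Notation G j := (Gproj h L 0 j).
Local Notation gam := (gammaN h (m + n)).
Local Notation e := (eps_sup h m n).
Local Notation energy M psi := (complex.Re (dot psi (Hchain h 0 M.-1 psi))).

Definition energy_lb M (psi : V) : R :=
  gam * (alpha e * nrm2 (psi - G (M - n).-1 psi) +
         beta e * nrm2 (G (M - n).-1 psi - G M.-1 psi)).

Lemma energy_bound_base M (psi : V) :
  (2 <= M <= L)%N -> (M <= m + n)%N -> energy_lb M psi <= energy M psi.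
Proof.
move=> /andP [M2 ML] Mmn; have e_le1 : 0 <= e <= 1.
  by rewrite eps_sup_ge0 (le_trans (ltW e_half)) // invf_le1 ?ler1n.
have win : (0 + M.-1.+1 <= L)%N by rewrite add0n prednK //; lia.
have := gap_le_window a0 h_psd psi win; rewrite add0n prednK; last lia.
have Mn_le : ((M - n).-1 <= M.-1)%N by lia.
apply: le_trans; rewrite (nrm2_compl_Gproj_nested a0 h_psd psi Mn_le).
set A := nrm2 _; set B := nrm2 _.
have [A0 B0] : 0 <= A /\ 0 <= B by split; apply: nrm2_ge0.
apply: (@le_trans _ _ (gam * (A + B))).
  by rewrite ler_wpM2l ?gammaN_ge0 // lerD // ler_piMl // ?alpha_le1 ?beta_le1.
by rewrite ler_wpM2r ?addr_ge0 // gammaN_le_gap //; lia.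
Qed.

Lemma energy_bound_step M (psi : V) : (M <= L)%N -> (m + n < M)%N ->
  energy_lb (M - n) psi <= energy (M - n) psi -> energy_lb M psi <= energy M psi.
Proof.
move=> ML mnM IH; set j1 := (M - n - n).-1; set j2 := (M - n).-1.
have j12 : (j1 < j2)%N by rewrite /j1 /j2; lia.
have mj2 : (m <= j2)%N by rewrite /j2; lia.
have j2n : (j2 + n = M.-1)%N by rewrite /j2; lia.
have j2L : (j2 + n < L)%N by lia.
rewrite (@Hchain_cat _ _ _ _ 0 j2) ?leq0n /=; last by rewrite /j2; lia.
rewrite /energy_lb linearD raddfD /= (nrm2_compl_Gproj_nested a0 h_psd psi (ltnW j12)).
have win : (j2 + n.+1 <= L)%N by rewrite addnS.
have := gap_le_window a0 h_psd psi win; rewrite j2n => gap_step.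
have := local_gap_step a0 h_psd psi j12 mj2 j2L e_half; rewrite j2n => local.
have gam_gap : gam <= gap h n.+1 by apply: gammaN_le_gap; lia.
have gam0 := gammaN_ge0 a0 h_psd (m + n).
move: IH gap_step local; rewrite /energy_lb -/j1 -/j2.
set W := nrm2 (psi - _); set A := nrm2 (G j1 psi - _).
set B := nrm2 (G j2 psi - _); set Z := nrm2 (psi - _) => IH gap_step local.
have Z0 : 0 <= Z := nrm2_ge0 _.
have h1 := ler_wpM2l gam0 local; have h2 := ler_wpM2r Z0 gam_gap.
nra.
Qed.

Lemma energy_bound M (psi : V) : (2 <= M <= L)%N -> energy_lb M psi <= energy M psi.
Proof.
elim/ltn_ind: M psi => M IH psi /andP [M2 ML].
have [Mmn|mnM] := leqP M (m + n); first by apply: energy_bound_base; rewrite ?M2.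
by apply: energy_bound_step => //; apply: IH; lia.
Qed.

End EnergyBound.

Unset Implicit Arguments.

Theorem theorem2p1 (R : realType) (d : nat) (h : two_site R d)
  (m n N : nat) (psi : vec R d N) :
  (2 <= d)%N ->
  positive_op h ->
  frustration_free h ->
  (1 <= m)%N -> (m <= n)%N ->
  eps_sup h m n < 2^-1 ->
  (2 <= N)%N ->
  (forall v, kerH h N 0 N.-1 v -> dot v psi = 0) ->
  let psi2 := Gproj h N 0 (N - n).-1 psi in
  let psi1 := psi - psi2 in
  ((gammaN h (m + n) *
     (alpha (eps_sup h m n) * nrm2 psi1 + beta (eps_sup h m n) * nrm2 psi2))%:C
   <= dot psi (Hchain h 0 N.-1 psi)).
Proof.
move=> d2 h_psd _ m_gt0 mn e_half N2 psi_perp /=.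
have a0 : 'I_d := Ordinal (ltnW d2).
have psi_G : Gproj h N 0 N.-1 psi = 0 by apply: proj_eq0 => v /psi_perp.
rewrite (ge0_complexE (dot_Hchain_ge0 a0 h_psd _ _ psi)) lecR.
have := energy_bound a0 h_psd m_gt0 mn e_half (M := N) psi.
by rewrite /energy_lb N2 leqnn psi_G subr0; apply.
Qed.
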